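(* Under the hypotheses of Theorem 1 (i.e., $(\mathbf{A},\mathbf{C})$ observable and $\{\mathcal{G}[k]\}$ satisfying the joint strong-connectivity assumption with parameter $T$), there exist observer gains $\mathbf{L}_1,\dots,\mathbf{L}_N$ (namely, any gains such that each $\mathbf{A}_{jj}-\mathbf{L}_j\mathbf{C}_{jj}$ is nilpotent) such that, when every node runs the freshness-index algorithm, for all initial states and all initial estimates, $\hat{\mathbf{z}}_i[k]=\mathbf{z}[k]$ (equivalently $\hat{\mathbf{x}}_i[k]=\mathbf{T}\hat{\mathbf{z}}_i[k]=\mathbf{x}[k]$) for every $i\in\mathcal{V}$ and every $k\ge n+2N(N-1)T$.
   Context: Graphs. Nodes $\mathcal{V}=\{1,\dots,N\}$. At each time $k\in\mathbb{N}=\{0,1,2,\dots\}$ there is a directed graph $\mathcal{G}[k]=(\mathcal{V},\mathcal{E}[k])$; $(i,j)\in\mathcal{E}[k]$ means node $i$ can send information to node $j$ at time $k$. $\mathcal{N}_i[k]=\{l\neq i:(l,i)\in\mathcal{E}[k]\}$ is the set of neighbors of $i$ at time $k$. The union graph over an interval of times has vertex set $\mathcal{V}$ and edge set the union of the edge sets over that interval. Joint strong-connectivity assumption: there is $T\in\mathbb{N}_+=\{1,2,\dots\}$ such that for every $k\in\mathbb{N}$ the union graph over $[kT,(k+1)T)$ is strongly connected. System. $\mathbf{x}[k+1]=\mathbf{A}\mathbf{x}[k]$, $\mathbf{y}_i[k]=\mathbf{C}_i\mathbf{x}[k]$, $\mathbf{A}\in\mathbb{R}^{n\times n}$, $\mathbf{C}=[\mathbf{C}_1^T\cdots\mathbf{C}_N^T]^T$.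 Since $(\mathbf{A},\mathbf{C})$ is observable, there is an invertible $\mathbf{T}$ (fixed throughout) such that with $\mathbf{x}[k]=\mathbf{T}\mathbf{z}[k]$ one has $\mathbf{z}[k+1]=\bar{\mathbf{A}}\mathbf{z}[k]$, $\mathbf{y}_i[k]=\mathbf{C}_i\mathbf{T}\mathbf{z}[k]$, where $\mathbf{z}=[\mathbf{z}^{(1)T}\cdots\mathbf{z}^{(N)T}]^T$ with $\mathbf{z}^{(j)}\in\mathbb{R}^{n_j}$ (''substate $j$''), $\sum_j n_j=n$, $\bar{\mathbf{A}}=\mathbf{T}^{-1}\mathbf{A}\mathbf{T}$ is block lower triangular with blocks $\mathbf{A}_{jq}$ ($\mathbf{A}_{jq}=0$ for $q>j$), so $\mathbf{z}^{(j)}[k+1]=\mathbf{A}_{jj}\mathbf{z}^{(j)}[k]+\sum_{q=1}^{j-1}\mathbf{A}_{jq}\mathbf{z}^{(q)}[k]$; and $\mathbf{C}_i\mathbf{T}=[\mathbf{C}_{i1}\ \cdots\ \mathbf{C}_{ii}\ 0\ \cdots\ 0]$, so $\mathbf{y}_i[k]=\sum_{q=1}^{i}\mathbf{C}_{iq}\mathbf{z}^{(q)}[k]$; moreover each pair $(\mathbf{A}_{jj},\mathbf{C}_{jj})$ is observable. Node $j$ is called the source node of substate $j$. Freshness indices. For each substate $j$ and node $i$, node $i$ keeps $\tau^{(j)}_i[k]\in\{\omega\}\cup\mathbb{N}$, where $\omega$ is a special symbol. Initialization: $\tau^{(j)}_j[0]=0$, $\tau^{(j)}_i[0]=\omega$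 for $i\neq j$. The source keeps $\tau^{(j)}_j[k]=0$ for all $k$. For $i\neq j$, let $\mathcal{M}^{(j)}_i[k]=\{l\in\mathcal{N}_i[k]:\tau^{(j)}_l[k]\neq\omega\}$. Case 1, $\tau^{(j)}_i[k]=\omega$: if $\mathcal{M}^{(j)}_i[k]\neq\emptyset$, let $u$ be any minimizer of $\tau^{(j)}_l[k]$ over $l\in\mathcal{M}^{(j)}_i[k]$, set $\tau^{(j)}_i[k+1]=\tau^{(j)}_u[k]+1$ and perform an ''adopt-$u$'' estimate update; otherwise set $\tau^{(j)}_i[k+1]=\omega$ and perform an ''open-loop'' estimate update. Case 2, $\tau^{(j)}_i[k]\neq\omega$: let $\mathcal{F}^{(j)}_i[k]=\{l\in\mathcal{M}^{(j)}_i[k]:\tau^{(j)}_l[k]<\tau^{(j)}_i[k]\}$; if nonempty, let $u$ be any minimizer of $\tau^{(j)}_l[k]$ over $\mathcal{F}^{(j)}_i[k]$, set $\tau^{(j)}_i[k+1]=\tau^{(j)}_u[k]+1$ and perform an adopt-$u$ update; otherwise set $\tau^{(j)}_i[k+1]=\tau^{(j)}_i[k]+1$ and perform an open-loop update. Estimates. Each node $i$ keeps $\hat{\mathbf{z}}_i[k]=[\hat{\mathbf{z}}^{(1)T}_i[k]\cdots\hat{\mathbf{z}}^{(N)T}_i[k]]^T$, with arbitrary initial value. Source update for substate $j$: $\hat{\mathbf{z}}^{(j)}_j[k+1]=(\mathbf{A}_{jj}-\mathbf{L}_j\mathbf{C}_{jj})\hat{\mathbf{z}}^{(j)}_j[k]+\sum_{q=1}^{j-1}(\mathbf{A}_{jq}-\mathbf{L}_j\mathbf{C}_{jq})\hat{\mathbf{z}}^{(q)}_j[k]+\mathbf{L}_j\mathbf{y}_j[k]$.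 Adopt-$u$ update at node $i\ne j$: $\hat{\mathbf{z}}^{(j)}_i[k+1]=\mathbf{A}_{jj}\hat{\mathbf{z}}^{(j)}_u[k]+\sum_{q=1}^{j-1}\mathbf{A}_{jq}\hat{\mathbf{z}}^{(q)}_i[k]$. Open-loop update at node $i\neq j$: $\hat{\mathbf{z}}^{(j)}_i[k+1]=\mathbf{A}_{jj}\hat{\mathbf{z}}^{(j)}_i[k]+\sum_{q=1}^{j-1}\mathbf{A}_{jq}\hat{\mathbf{z}}^{(q)}_i[k]$. These updates are carried out for every substate $j$ at every time $k$. *)

From HB Require Import structures.
From mathcomp Require Import all_boot all_order all_algebra.
Set Implicit Arguments. Unset Strict Implicit. Unset Printing Implicit Defensive.
Import Order.TTheory GRing.Theory Num.Theory.
Local Open Scope ring_scope.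

Definition nilpotent_mx (R : pzRingType) (m : nat) (M : 'M[R]_m) : Prop :=
  exists k : nat, M ^+ k = 0.

Definition obs_mx (R : fieldType) (m p : nat) (A : 'M[R]_m) (C : 'M[R]_(p, m))
  : 'M[R]_(\sum_(k < m) p, m) :=
  \mxcol_(k < m) (C *m A ^+ k).

Definition observable (R : fieldType) (m p : nat) (A : 'M[R]_m) (C : 'M[R]_(p, m))
  : Prop := \rank (obs_mx A C) = m.

Definition block_lower (R : fieldType) (N : nat) (r c : 'I_N -> nat)
  (B : forall j q : 'I_N, 'M[R]_(r j, c q)) : Prop :=
  forall j q : 'I_N, (j < q)%N -> B j q = 0.

(* Time-varying directed graphs on nodes 'I_N: E k l i means (l,i) is an edge
   at time k, i.e. l can send to i at time k. *)
Definition neighbor (N : nat) (E : nat -> rel 'I_N) (k : nat) (i l : 'I_N) : bool :=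
  (l != i) && E k l i.

Definition union_rel (N : nat) (E : nat -> rel 'I_N) (a T : nat) : rel 'I_N :=
  fun u v => has (fun t => E t u v) (iota a T).

Definition jointly_strongly_connected (N : nat) (E : nat -> rel 'I_N) (T : nat) : Prop :=
  (0 < T)%N /\
  forall k : nat, forall u v : 'I_N, connect (union_rel E (k * T) T) u v.

Section Algo.
Variables (R : fieldType) (N : nat) (n p : 'I_N -> nat).
Variables (A : forall j q : 'I_N, 'M[R]_(n j, n q)).
Variables (C : forall i q : 'I_N, 'M[R]_(p i, n q)).

Definition state_traj (z : nat -> forall j : 'I_N, 'cV[R]_(n j)) : Prop :=
  forall k (j : 'I_N),
    z k.+1 j = A j j *m z k j + \sum_(q < N | (q < j)%N) A j q *m z k q.

Definition output (z : nat -> forall j : 'I_N, 'cV[R]_(n j)) (k : nat) (i : 'I_N)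
  : 'cV[R]_(p i) := \sum_(q < N | (q <= i)%N) C i q *m z k q.

Variable (E : nat -> rel 'I_N).
Variable (L : forall j : 'I_N, 'M[R]_(n j, p j)).

(* Freshness index: None stands for the special symbol omega. *)
(* Candidate set used by node i (i <> j) for substate j at time k:
   case 1 (tau_i = omega): M_i^(j)[k]; case 2 (tau_i = Some a): F_i^(j)[k]. *)
Definition candidate (tau : nat -> 'I_N -> 'I_N -> option nat)
    (k : nat) (j i l : 'I_N) : bool :=
  neighbor E k i l &&
  match tau k j i, tau k j l with
  | None, Some _ => true
  | Some a, Some b => (b < a)%N
  | _, None => false
  end.

(* A run of the freshness-index algorithm (for every admissible choice of
   minimizers), with true state z and estimates zh (zh k i j = estimate of
   substate j at node i at time k). *)
Definition freshness_run (z : nat -> forall j : 'I_N, 'cV[R]_(n j))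
    (tau : nat -> 'I_N -> 'I_N -> option nat)
    (zh : nat -> 'I_N -> forall j : 'I_N, 'cV[R]_(n j)) : Prop :=
  (forall j i : 'I_N, tau 0%N j i = (if i == j then Some 0%N else None)) /\
  (forall k (j : 'I_N),
     tau k.+1 j j = Some 0%N /\
     zh k.+1 j j = (A j j - L j *m C j j) *m zh k j j
                   + \sum_(q < N | (q < j)%N) (A j q - L j *m C j q) *m zh k j q
                   + L j *m output z k j) /\
  (forall k (j i : 'I_N), i != j ->
     ((exists l, candidate tau k j i l) ->
        exists u : 'I_N,
          [/\ candidate tau k j i u,
              (forall l, candidate tau k j i l ->
                 (odflt 0 (tau k j u) <= odflt 0 (tau k j l))%N),
              tau k.+1 j i = omap S (tau k j u) &
              zh k.+1 i j = A j j *m zh k u j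
                            + \sum_(q < N | (q < j)%N) A j q *m zh k i q]) /\
     (~ (exists l, candidate tau k j i l) ->
        tau k.+1 j i = omap S (tau k j i) /\
        zh k.+1 i j = A j j *m zh k i j
                      + \sum_(q < N | (q < j)%N) A j q *m zh k i q)).

End Algo.

From mathcomp Require Import all_boot all_order all_algebra zify.
Set Implicit Arguments. Unset Strict Implicit. Unset Printing Implicit Defensive.
Import GRing.Theory.
Local Open Scope ring_scope.

(* Once the substates q < j are estimated exactly, the source of substate j runs a deadbeat
   observer whose error is multiplied by the nilpotent matrix A_jj - L_j C_jj at each step, so
   it is exact after n_j steps. Every other node holds a copy that originated at the source some
   known number of steps ago and was propagated through the true dynamics, so a copy that left
   the source after it became exact is exact. Joint strong connectivity makes the set of nodes
   with such a copy grow in every window of T steps, so within 2(N-1)T steps all nodes have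
   one.
   Deadbeat gains exist for an observable pair: the row spaces W_k of covectors of the state
   that the last k outputs determine exhaust the space after n steps, and since W_(k+1) A lies
   in W_k + C, the gain can be chosen level by level so that A - L C maps W_(k+1) into W_k. *)

Lemma nilpotent_mx_pow_size (F : fieldType) m (M : 'M[F]_m) :
  nilpotent_mx M -> M ^+ m = 0.
Proof.
case: m M => [|m] M [k Mk]; first by rewrite thinmx0.
have : mxminpoly M %| ('X - 0%:P) ^+ k.
  by apply: mxminpoly_min; rewrite subr0 rmorphXn /= horner_mx_X.
case/dvdp_exp_XsubCP => d _; rewrite subr0 eqp_monic ?monicXn ?mxminpoly_monic //.
move=> /eqP minM.
have le_dm : (d <= m.+1)%N.
  have := dvdp_leq (monic_neq0 (char_poly_monic M)) (mxminpoly_dvd_char M).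
  by rewrite minM size_polyXn size_char_poly.
have Md : M ^+ d = 0.
  by rewrite -[M in M ^+ d]horner_mx_X -rmorphXn /= -minM mx_root_minpoly.
by rewrite -[X in M ^+ X](subnK le_dm) exprD Md mulr0.
Qed.

Lemma add_proj_mx_compl (F : fieldType) m n (W : 'M[F]_n) (X : 'M_(m, n)) :
  X *m proj_mx W W^C%MS + X *m proj_mx W^C%MS W = X.
Proof. by rewrite add_proj_mx ?capmx_compl // submx_full ?addsmx_compl_full. Qed.

Section DeadbeatGain.
Variables (F : fieldType) (m p : nat) (A : 'M[F]_m) (C : 'M[F]_(p, m)).

(* X <= recon_mx k iff X x[t] is determined by the outputs y[t-k], ..., y[t-1]. *)
Fixpoint recon_mx k : 'M[F]_m :=
  if k is k'.+1 then kermx (A *m cokermx (recon_mx k' + C)%MS) else 0.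

Fixpoint obs_span k : 'M[F]_m :=
  if k is k'.+1 then (obs_span k' + C *m A ^+ k')%MS else 0.

Lemma sub_recon_mxS k r (X : 'M_(r, m)) :
  (X <= recon_mx k.+1)%MS = (X *m A <= recon_mx k + C)%MS.
Proof. by rewrite /= sub_kermx submxE mulmxA. Qed.

Lemma recon_mx_homo i k : (i <= k)%N -> (recon_mx i <= recon_mx k)%MS.
Proof.
have recon_mxS l : (recon_mx l <= recon_mx l.+1)%MS.
  elim: l => [|l IHl]; first exact: sub0mx.
  by rewrite sub_recon_mxS (submx_trans _ (addsmxS IHl (submx_refl C))) -?sub_recon_mxS.
move=> /subnK <-; elim: (k - i)%N => [|d IHd]; first exact: submx_refl.
exact: submx_trans IHd (recon_mxS _).
Qed.

Lemma sub_obs_span i k : (i < k)%N -> (C *m A ^+ i <= obs_span k)%MS.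
Proof.
move=> /subnK <-; elim: (k - i.+1)%N => [|d IHd] /=; first exact: addsmxSr.
exact: submx_trans IHd (addsmxSl _ _).
Qed.

Lemma sub_recon_mx k r (X : 'M_(r, m)) :
  (X *m A ^+ k <= obs_span k)%MS -> (X <= recon_mx k)%MS.
Proof.
elim: k r X => [|k IHk] r X; first by rewrite expr0 mulmx1.
case/sub_addsmxP=> u XAk; rewrite sub_recon_mxS.
have -> : X *m A = (X *m A - u.2 *m C) + u.2 *m C by rewrite subrK.
rewrite addmx_sub_adds ?submxMl // IHk //.
by rewrite mulmxBl -!mulmxA mulmxE -exprS XAk addrK submxMl.
Qed.

Lemma observable_recon_mx_full : observable A C -> (1%:M <= recon_mx m)%MS.
Proof.
move=> obsAC; rewrite -[1%:M]mul1mx; apply: sub_recon_mx; rewrite mul1mx.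
apply: submx_full; rewrite -sub1mx.
have full_obs : (1%:M <= obs_mx A C)%MS by rewrite sub1mx /row_full obsAC.
apply: submx_trans full_obs _.
rewrite /obs_mx submxE mxcol_mul.
under eq_mxcol => i do rewrite (eqP (_ : C *m A ^+ i *m _ == 0)) -?submxE ?sub_obs_span //.
by rewrite mxcol0.
Qed.

Lemma recon_step_gain k :
  exists G : 'M_(m, p), (recon_mx k.+1 *m (A - G *m C) <= recon_mx k)%MS.
Proof.
have /sub_addsmxP[u WA] : (recon_mx k.+1 *m A <= recon_mx k + C)%MS.
  by rewrite -sub_recon_mxS.
exists (pinvmx (recon_mx k.+1) *m u.2).
set W := recon_mx k.+1; set P := pinvmx W.
rewrite mulmxBr -{1}(mulmxKpV (submx_refl W)) -/P -(mulmxA _ W A) WA.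
by rewrite mulmxDr !mulmxA addrK submxMl.
Qed.

(* Used to extend a gain to the next level without changing it on the earlier levels W. *)
Definition glue_gain (W : 'M[F]_m) (L G : 'M[F]_(m, p)) :=
  proj_mx W W^C%MS *m L + proj_mx W^C%MS W *m G.

Lemma glue_gain_sub (W : 'M_m) L G r (X : 'M_(r, m)) :
  (X <= W)%MS -> X *m (A - glue_gain W L G *m C) = X *m (A - L *m C).
Proof.
move=> sXW; rewrite !mulmxBr (mulmxA X) mulmxDr (mulmxA X (proj_mx W _)).
rewrite (mulmxA X (proj_mx _ W)) proj_mx_id ?capmx_compl //.
by rewrite proj_mx_0 ?mul0mx ?addr0 -?mulmxA // capmxC capmx_compl.
Qed.

Lemma sub_proj_mx_compl (W V : 'M[F]_m) r (X : 'M_(r, m)) :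
  (W <= V)%MS -> (X <= V)%MS -> (X *m proj_mx W^C%MS W <= V)%MS.
Proof.
move=> sWV sXV; rewrite -(addKr (X *m proj_mx W W^C%MS) (X *m _)) add_proj_mx_compl.
by rewrite addmx_sub // eqmx_opp (submx_trans (proj_mx_sub _ _ _)).
Qed.

Lemma glue_gain_split (W : 'M_m) L G r (X : 'M_(r, m)) :
  X *m (A - glue_gain W L G *m C) =
  X *m proj_mx W W^C%MS *m (A - L *m C) + X *m proj_mx W^C%MS W *m (A - G *m C).
Proof.
have splitX := add_proj_mx_compl W X.
rewrite /glue_gain; move: (proj_mx W _) (proj_mx _ W) splitX => P P' splitX.
rewrite !mulmxBr mulmxDl mulmxDr !mulmxA -[in X *m A]splitX mulmxDl.
by rewrite opprD addrACA.
Qed.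

Lemma recon_flag_gain k : exists L : 'M_(m, p),
  forall l, (l < k)%N -> (recon_mx l.+1 *m (A - L *m C) <= recon_mx l)%MS.
Proof.
elim: k => [|k [L HL]]; first by exists 0.
have [G HG] := recon_step_gain k.
have stableW : (recon_mx k *m (A - L *m C) <= recon_mx k)%MS.
  case: k HL {HG} => [|k] HL; first by rewrite mul0mx sub0mx.
  exact: submx_trans (HL k (ltnSn k)) (recon_mx_homo (leqnSn k)).
exists (glue_gain (recon_mx k) L G) => l; rewrite ltnS leq_eqVlt => /predU1P[-> | lt_lk].
  rewrite glue_gain_split addmx_sub //.
    exact: submx_trans (submxMr _ (proj_mx_sub _ _ _)) stableW.
  apply: submx_trans (submxMr _ _) HG.
  by rewrite sub_proj_mx_compl ?recon_mx_homo.
by rewrite glue_gain_sub ?HL // recon_mx_homo.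
Qed.

Lemma deadbeat_gain : observable A C -> exists L : 'M_(m, p), nilpotent_mx (A - L *m C).
Proof.
move=> obsAC; have [L HL] := recon_flag_gain m; exists L, m.
have recon_mx_vanish k : (k <= m)%N -> recon_mx k *m (A - L *m C) ^+ k = 0.
  elim: k => [|k IHk] lt_km; first by rewrite mul0mx.
  apply/eqP; rewrite -submx0 -(IHk (ltnW lt_km)) exprS -mulmxE mulmxA submxMr //.
  exact: HL.
apply/eqP; rewrite -submx0 -(recon_mx_vanish m (leqnn m)) -[X in (X <= _)%MS]mul1mx.
by rewrite submxMr // observable_recon_mx_full.
Qed.

End DeadbeatGain.

Lemma connect_exit_edge (V : finType) (e : rel V) (S : {set V}) x y :
  connect e x y -> x \in S -> y \notin S ->
  exists a b, [/\ a \in S, b \notin S & e a b].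
Proof.
case/connectP=> pth + ->; elim: pth x => [|w pth IHpth] x /=; first by move=> _ ->.
case/andP=> e_xw e_pth xS yS; have [wS | wNS] := boolP (w \in S).
  exact: IHpth e_pth wS yS.
by exists x, w.
Qed.

Section FreshnessRun.
Variables (R : fieldType) (N : nat) (n p : 'I_N -> nat).
Variables (A : forall j q : 'I_N, 'M[R]_(n j, n q)) (C : forall i q : 'I_N, 'M[R]_(p i, n q)).
Variables (E : nat -> rel 'I_N) (L : forall j : 'I_N, 'M[R]_(n j, p j)).
Variables (z : nat -> forall j : 'I_N, 'cV[R]_(n j)) (tau : nat -> 'I_N -> 'I_N -> option nat).
Variable (zh : nat -> 'I_N -> forall j : 'I_N, 'cV[R]_(n j)).
Hypothesis run : freshness_run A C E L z tau zh.

Lemma tau_source k j : tau k j j = Some 0%N.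
Proof. by case: run k => tau0 [tau_src _] [|k]; [rewrite tau0 eqxx | case: (tau_src k j)]. Qed.

Lemma candidate_tau k j i l : candidate E tau k j i l -> exists b, tau k j l = Some b.
Proof. by case/andP=> _; case: (tau k j i) => [a|]; case: (tau k j l) => [b|] // _; exists b. Qed.

Lemma nonsource_step k j i : i != j ->
  (exists u : 'I_N,
    [/\ candidate E tau k j i u,
        (forall l, candidate E tau k j i l ->
           (odflt 0 (tau k j u) <= odflt 0 (tau k j l))%N),
        tau k.+1 j i = omap S (tau k j u) &
        zh k.+1 i j = A j j *m zh k u j + \sum_(q < N | (q < j)%N) A j q *m zh k i q]) \/
  [/\ forall l, ~~ candidate E tau k j i l,
      tau k.+1 j i = omap S (tau k j i) &
      zh k.+1 i j = A j j *m zh k i j + \sum_(q < N | (q < j)%N) A j q *m zh k i q].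
Proof.
case: run => _ [_ run_nonsource] ij; have [adopt open_loop] := run_nonsource k j i ij.
have [/existsP[l cand_l] | ] := boolP [exists l, candidate E tau k j i l].
  by left; apply: adopt; exists l.
rewrite negb_exists => /forallP no_cand; right.
by have [] := open_loop (fun '(ex_intro l cand_l) => negP (no_cand l) cand_l).
Qed.

(* tau k j i = Some d means that node i's copy of substate j at time k left the source at
   time k - d; fresh_since says it left at time s or later. *)
Definition fresh_since j s k i : bool :=
  if tau k j i is Some d then (d + s <= k)%N else false.

Lemma fresh_since_ge j s k i : fresh_since j s k i -> (s <= k)%N.
Proof. by rewrite /fresh_since; case: (tau k j i) => // d; lia. Qed.

Lemma fresh_since_source j s k : (s <= k)%N -> fresh_since j s k j.
Proof. by rewrite /fresh_since tau_source. Qed.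

Lemma fresh_sinceS j s k i : fresh_since j s k i -> fresh_since j s k.+1 i.
Proof.
have [-> Fj | ij] := eqVneq i j; first by apply: fresh_since_source; have := fresh_since_ge Fj; lia.
rewrite /fresh_since; case tau_i: (tau k j i) => [d|] // le_dsk.
case: (nonsource_step k ij) => [[u [/andP[_ +] _ -> _]] | [_ -> _]]; rewrite tau_i //=.
by case: (tau k j u) => //= b; lia.
Qed.

Lemma fresh_since_le j s k k' i :
  (k <= k')%N -> fresh_since j s k i -> fresh_since j s k' i.
Proof.
move=> /subnK <-; elim: (k' - k)%N => [|d IHd] Fi; first by rewrite add0n.
by rewrite addSn fresh_sinceS ?IHd.
Qed.

Lemma fresh_since_neighbor j s k i l :
  fresh_since j s k l -> neighbor E k i l -> fresh_since j s k.+1 i.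
Proof.
move=> Fl nb_il; have [-> | ij] := eqVneq i j.
  by apply: fresh_since_source; have := fresh_since_ge Fl; lia.
have [Fi | NFi] := boolP (fresh_since j s k i); first exact: fresh_sinceS.
move: Fl NFi; rewrite /fresh_since; case tau_l: (tau k j l) => [b|] // le_bsk NFi.
have cand_l : candidate E tau k j i l.
  by rewrite /candidate nb_il tau_l; move: NFi; case: (tau k j i) => //= a; lia.
case: (nonsource_step k ij) => [[u [cand_u min_u -> _]] | [no_cand _]]; last first.
  by have := no_cand l; rewrite cand_l.
have [b' tau_u] := candidate_tau cand_u.
by have := min_u l cand_l; rewrite tau_u tau_l /=; lia.
Qed.

Hypothesis traj : state_traj A z.

Definition exact_from (j : 'I_N) s := forall k, (s <= k)%N -> forall i, zh k i j = z k j.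

Lemma output_split k (j : 'I_N) : output C z k j =
  C j j *m z k j + \sum_(q < N | (q < j)%N) C j q *m z k q.
Proof.
by rewrite /output (bigD1 j) //=; congr (_ + _); apply: eq_bigl => q; rewrite ltn_neqAle andbC.
Qed.

Lemma source_error_step (j : 'I_N) s :
  (forall q : 'I_N, (q < j)%N -> exact_from q s) -> forall k, (s <= k)%N ->
  zh k.+1 j j - z k.+1 j = (A j j - L j *m C j j) *m (zh k j j - z k j).
Proof.
move=> lower_exact k le_sk; case: run => _ [run_source _]; have [_ ->] := run_source k j.
rewrite traj output_split.
rewrite (eq_bigr (fun q => A j q *m z k q - L j *m (C j q *m z k q))) => [|q lt_qj]; last first.
  by rewrite lower_exact // mulmxBl mulmxA.
rewrite sumrB -mulmx_sumr mulmxDr [in RHS]mulmxBr mulmxBl -(mulmxA (L j)).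
rewrite addrACA subrK (addrC (A j j *m z k j)) addrKA.
by rewrite mulmxBl -(mulmxA (L j)) opprB addrA.
Qed.

Lemma source_exact (j : 'I_N) s :
  nilpotent_mx (A j j - L j *m C j j) ->
  (forall q : 'I_N, (q < j)%N -> exact_from q s) ->
  forall k, (s + n j <= k)%N -> zh k j j = z k j.
Proof.
move=> /nilpotent_mx_pow_size nilM lower_exact k le_k.
have err t : zh (s + t)%N j j - z (s + t)%N j =
             (A j j - L j *m C j j) ^+ t *m (zh s j j - z s j).
  elim: t => [|t IHt]; first by rewrite addn0 expr0 mul1mx.
  by rewrite addnS (source_error_step lower_exact) ?leq_addr // IHt mulmxA mulmxE -exprS.
by apply/eqP; rewrite -subr_eq0 -(subnKC le_k) -addnA err exprD nilM mul0r mul0mx.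
Qed.

Lemma fresh_since_pred j s k i : i != j -> fresh_since j s k.+1 i ->
  exists2 w, fresh_since j s k w &
    zh k.+1 i j = A j j *m zh k w j + \sum_(q < N | (q < j)%N) A j q *m zh k i q.
Proof.
move=> ij; rewrite /fresh_since.
case: (nonsource_step k ij) => [[u [cand_u _ -> ->]] | [_ -> ->]].
  have [b tau_u] := candidate_tau cand_u.
  by rewrite tau_u /= => le_bsk; exists u => //; rewrite tau_u; lia.
by case tau_i: (tau k j i) => [b|] //= le_bsk; exists i => //; rewrite tau_i; lia.
Qed.

Lemma fresh_exact (j : 'I_N) s0 s : (s0 <= s)%N ->
  (forall q : 'I_N, (q < j)%N -> exact_from q s0) ->
  (forall k, (s <= k)%N -> zh k j j = z k j) ->
  forall k i, fresh_since j s k i -> zh k i j = z k j.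
Proof.
move=> le_s0s lower_exact source_ok; elim=> [|k IHk] i Fi.
  have [-> | ij] := eqVneq i j; first exact/source_ok/(fresh_since_ge Fi).
  by move: Fi; rewrite /fresh_since; case: run => -> _; rewrite (negbTE ij).
have [-> | ij] := eqVneq i j; first exact/source_ok/(fresh_since_ge Fi).
have [w Fw ->] := fresh_since_pred ij Fi; have le_sk := fresh_since_ge Fw.
rewrite IHk // traj; congr (_ + _); apply: eq_bigr => q lt_qj.
by rewrite lower_exact //; lia.
Qed.

Variable T : nat.
Hypothesis connected : jointly_strongly_connected E T.

Definition fresh_set j s k := [set i | fresh_since j s k i].

Lemma fresh_set_homo j s k k' :
  (k <= k')%N -> fresh_set j s k \subset fresh_set j s k'.
Proof. by move=> le_kk'; apply/subsetP => i; rewrite !inE; apply: fresh_since_le. Qed.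

Lemma fresh_set_grows j s m : (s <= m * T)%N -> fresh_set j s (m * T) != setT ->
  (#|fresh_set j s (m * T)| < #|fresh_set j s (m.+1 * T)|)%N.
Proof.
move=> le_smT; rewrite eqEsubset subsetT /= => /subsetPn[v _ vNF].
have jF : j \in fresh_set j s (m * T) by rewrite inE fresh_since_source.
have [a [b [aF bNF]]] := connect_exit_edge (connected.2 m j v) jF vNF.
case/hasP=> t; rewrite mem_iota => /andP[le_mTt lt_t] E_ab.
have Fb : fresh_since j s t.+1 b.
  apply: (fresh_since_neighbor (l := a)).
    by move: aF; rewrite inE; apply: fresh_since_le.
  by rewrite /neighbor E_ab andbT; apply: contraNneq bNF => <-.
apply/proper_card/properP; split; first by apply: fresh_set_homo; rewrite mulSn leq_addl.
by exists b => //; rewrite inE (fresh_since_le _ Fb) // mulSn; lia.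
Qed.

Lemma card_fresh_set j s m c : (s <= m * T)%N ->
  (minn N c.+1 <= #|fresh_set j s ((m + c) * T)|)%N.
Proof.
move=> le_smT; elim: c => [|c IHc].
  rewrite addn0 geq_min card_gt0; apply/orP; right.
  by apply/set0Pn; exists j; rewrite inE fresh_since_source.
have [full | notfull] := eqVneq (fresh_set j s ((m + c) * T)) setT.
  rewrite geq_min -{1}(card_ord N) -cardsT -full; apply/orP; left.
  by apply/subset_leq_card/fresh_set_homo; rewrite leq_mul2r addnS leqnSn orbT.
have le_smcT : (s <= (m + c) * T)%N by apply: leq_trans le_smT (leq_mul (leq_addr c m) _).
by have := fresh_set_grows le_smcT notfull; rewrite -addnS; move: IHc; lia.
Qed.

Lemma fresh_since_everywhere j s k i : (1 < N)%N ->
  (s + 2 * (N - 1) * T <= k)%N -> fresh_since j s k i.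
Proof.
move=> gt1N le_k; have gt0T := connected.1.
have le_qT_s : (s %/ T * T <= s)%N by rewrite leq_divM.
have le_s_qT : (s <= (s %/ T).+1 * T)%N by rewrite ltnW ?ltn_ceil.
have full : fresh_set j s (((s %/ T).+1 + N.-1) * T) = setT.
  apply/eqP; rewrite eqEcard subsetT cardsT card_ord.
  by have := card_fresh_set j N.-1 le_s_qT; rewrite prednK ?minnn // ltnW.
have := in_setT i; rewrite -full inE => Fi.
apply: fresh_since_le Fi; rewrite mulnDl mulSnr.
have : (N.-1 * T + T <= 2 * (N - 1) * T)%N by rewrite -mulSnr leq_mul //; lia.
lia.
Qed.

Hypothesis nilpotent_gain : forall j, nilpotent_mx (A j j - L j *m C j j).

(* Each source q <= j needs n_q steps to converge, then 2(N-1)T steps to reach all nodes. *)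
Definition settle_time (j : 'I_N) :=
  (\sum_(q < N | (q <= j)%N) n q + j.+1 * (2 * (N - 1) * T))%N.

Lemma settle_time_bound (j : 'I_N) :
  (settle_time j <= \sum_(q < N) n q + 2 * N * (N - 1) * T)%N.
Proof.
have -> : (2 * N * (N - 1) * T = N * (2 * (N - 1) * T))%N by rewrite !mulnA (mulnC N).
apply: leq_add; last exact: leq_mul.
exact: (sub_le_big leqnn (fun x y => leq_addr y x)).
Qed.

Lemma exact_from_le j s s' : (s <= s')%N -> exact_from j s -> exact_from j s'.
Proof. by move=> le_ss' ex k le_s'k; apply: ex; apply: leq_trans le_s'k. Qed.

Lemma substate_exact (j : 'I_N) : exact_from j (settle_time j).
Proof.
suff: forall m, (j < m)%N -> exact_from j (settle_time j) by apply; apply: ltnSn.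
move=> m; elim: m j => [|m IHm] j // lt_jm.
set D := (2 * (N - 1) * T)%N; set s0 := (\sum_(q < N | (q < j)%N) n q + j * D)%N.
have lower_exact (q : 'I_N) : (q < j)%N -> exact_from q s0.
  move=> lt_qj; apply: exact_from_le (IHm q (leq_trans lt_qj lt_jm)).
  apply: leq_add; last exact: leq_mul.
  by apply: (sub_le_big leqnn (fun x y => leq_addr y x)) => r le_rq; apply: leq_ltn_trans lt_qj.
have source_ok := source_exact (nilpotent_gain j) lower_exact.
have settle_jE : settle_time j = (s0 + n j + D)%N.
  have sumE : (\sum_(q < N | (q <= j)%N) n q = \sum_(q < N | (q < j)%N) n q + n j)%N.
    by rewrite (bigD1 j) //= addnC; congr (_ + _); apply: eq_bigl => q; rewrite andbC -ltn_neqAle.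
  by rewrite /settle_time sumE mulSnr -/D; lia.
move=> k; rewrite settle_jE => le_k i; have [-> | ij] := eqVneq i j.
  by apply: source_ok; apply: leq_trans le_k; rewrite leq_addr.
have gt1N : (1 < N)%N.
  by move: (ltn_ord i) (ltn_ord j) ij; rewrite -val_eqE /= neq_ltn; lia.
by apply: (fresh_exact (leq_addr _ _) lower_exact source_ok); apply: fresh_since_everywhere.
Qed.

End FreshnessRun.

Theorem corollary1 (R : realFieldType) (N : nat) (n p : 'I_N -> nat)
    (A : forall j q : 'I_N, 'M[R]_(n j, n q))
    (C : forall i q : 'I_N, 'M[R]_(p i, n q))
    (E : nat -> rel 'I_N) (T : nat) :
  block_lower A -> block_lower C ->
  (forall j : 'I_N, observable (A j j) (C j j)) ->
  jointly_strongly_connected E T ->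
  (exists L : forall j : 'I_N, 'M[R]_(n j, p j),
      forall j : 'I_N, nilpotent_mx (A j j - L j *m C j j)) /\
  (forall L : forall j : 'I_N, 'M[R]_(n j, p j),
     (forall j : 'I_N, nilpotent_mx (A j j - L j *m C j j)) ->
     forall (z : nat -> forall j : 'I_N, 'cV[R]_(n j))
            (tau : nat -> 'I_N -> 'I_N -> option nat)
            (zh : nat -> 'I_N -> forall j : 'I_N, 'cV[R]_(n j)),
       state_traj A z ->
       freshness_run A C E L z tau zh ->
       forall (k : nat) (i j : 'I_N),
         (\sum_(q < N) n q + 2 * N * (N - 1) * T <= k)%N ->
         zh k i j = z k j).
Proof.
(* Block triangularity is already built into the sums over q < j in the dynamics. *)
move=> _ _ observableA connected; split.
  have gain j : exists L : 'M[R]_(n j, p j), (A j j - L *m C j j) ^+ n j == 0.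
    have [L nilL] := deadbeat_gain (observableA j).
    by exists L; rewrite nilpotent_mx_pow_size.
  by exists (fun j => xchoose (gain j)) => j; exists (n j); apply/eqP/(xchooseP (gain j)).
move=> L nilpotent_gain z tau zh traj run k i j le_k.
apply: (substate_exact run traj connected nilpotent_gain).
exact: leq_trans (settle_time_bound _ _ _) le_k.
Qed.
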